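(* Let $\Psi_1 = 1$, and for each integer $k \geq 2$ let $\Psi_k = \frac{1 + \Psi_{k_1} + \Psi_{k_2}}{2}$, where for each $k$ the pair of positive integers $k_1, k_2$ with $k_1 + k_2 = k$ may be chosen arbitrarily. Then for every integer $k \geq 2$ there exist positive constants $C_k$ and $D_k$ (depending only on $k$ and the chosen sequence $(\Psi_j)$) such that for every real $M > 0$ and every finite set $A$ of positive real numbers with $|AA| \leq M|A|$, \[ |kA| \geq \frac{C_k}{M^{D_k}} \cdot |A|^{\Psi_k}. \] In particular, for every integer $k \geq 2$ there exist positive constants $C_k, D_k$ such that for every real $M>0$ and every finite set $A$ of positive real numbers with $|AA| \leq M|A|$, \[ |kA| \geq \frac{C_k}{M^{D_k}} \cdot |A|^{\log_4 (2k)}. \]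
   Context: For a finite set $A$ of real numbers, $AA = \{ab : a, b \in A\}$ is the product set, and $kA = \{a_1 + a_2 + \cdots + a_k : a_1, \dots, a_k \in A\}$ is the $k$-fold sum set. $|X|$ denotes the cardinality of a finite set $X$. *)

From HB Require Import structures.
From mathcomp Require Import all_boot all_order all_algebra.
From mathcomp Require Import finmap.
From mathcomp Require Import all_classical all_reals all_analysis.
Set Implicit Arguments. Unset Strict Implicit. Unset Printing Implicit Defensive.
Import Order.TTheory GRing.Theory Num.Theory.
Local Open Scope ring_scope.
Local Open Scope fset_scope.

Definition prodset (R : realType) (A : {fset R}) : {fset R} :=
  [fset (a * b)%R | a in A, b in A].

Fixpoint sumset (R : realType) (k : nat) (A : {fset R}) : {fset R} :=
  match k with
  | 0 => [fset (0 : R)]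
  | k'.+1 => [fset (x + a)%R | x in sumset k' A, a in A]
  end.

Definition admissible_Psi (R : realType) (Psi : nat -> R) : Prop :=
  Psi 1%N = 1 /\
  forall k : nat, (2 <= k)%N ->
    exists k1 k2 : nat, [/\ (0 < k1)%N, (0 < k2)%N, (k1 + k2 = k)%N &
      Psi k = (1 + Psi k1 + Psi k2) / 2].

From HB Require Import structures.
From mathcomp Require Import all_boot all_order all_algebra.
From mathcomp Require Import finmap.
From mathcomp Require Import all_classical all_reals all_analysis.
From mathcomp Require Import ring lra zify.
Set Implicit Arguments. Unset Strict Implicit. Unset Printing Implicit Defensive.
Import Order.TTheory GRing.Theory Num.Theory.
Local Open Scope fset_scope.
Local Open Scope ring_scope.

(* Write k = k1 + k2 and, for a ratio q, F_q = {a in A | q a in A}.  Ruzsa's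
   triangle inequality gives |A/A| <= M^2 |A|, so counting the |A|^2 pairs of
   A x A along the lines through the origin shows that at least |A| / 2 ratios
   are rich, |F_q| >= |A| / (2 M^2).  A rich F_q has doubling at most 2 M^3,
   so by induction |k1 F_q| and |k2 F_q| are large.  For consecutive rich
   slopes q < q', the sums (b + c, q b + q' c) with b in k1 F_q, c in k2 F_q'
   are pairwise distinct, lie in ((k1 + k2) A)^2, and lie strictly between the
   two lines; these cones are disjoint, so |kA|^2 >= (|A| / 4) |k1 F| |k2 F|,
   i.e. the exponent (1 + Psi k1 + Psi k2) / 2.  Splitting k in halves gives
   Psi k >= log_4 (2 k + 2). *)

Lemma card_imfset2_inj (T1 T2 T : choiceType) (f : T1 -> T2 -> T)
    (B : {fset T1}) (C : {fset T2}) :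
  (forall b c b' c', b \in B -> c \in C -> b' \in B -> c' \in C ->
    f b c = f b' c' -> b = b' /\ c = c') ->
  #|` [fset f b c | b in B, c in C]| = (#|` B| * #|` C|)%N.
Proof.
move=> finj; rewrite Imfset.imfset2E /= size_seq_fset undup_id ?size_allpairs //.
apply: allpairs_uniq; rewrite ?fset_uniq //.
move=> [b c] [b' c'] /allpairsP [[x y] /= [xB yC [-> ->]]].
move=> /allpairsP [[x' y'] /= [xB' yC' [-> ->]]] /= e.
by have [-> ->] := finj _ _ _ _ xB yC xB' yC' e.
Qed.

Lemma card_fsetM_le (T1 T2 : choiceType) (B : {fset T1}) (C : {fset T2}) :
  (#|` B `*` C| <= #|` B| * #|` C|)%N.
Proof.
rewrite /fsetM Imfset.imfset2E /= size_seq_fset (leq_trans (size_undup _)) //.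
by rewrite size_allpairs.
Qed.

Lemma card_fset_sep (T : choiceType) (A : {fset T}) (P : pred T) :
  #|` [fset a in A | P a]| = (\sum_(a <- A) P a)%N.
Proof.
rewrite card_fset_sum1 -big_fset_condE big_mkcond /=.
by apply: eq_bigr => a _; case: (P a).
Qed.

Lemma sqr_powR (R : realType) (a x : R) : 0 <= a -> (a `^ x) ^+ 2 = a `^ (x * 2).
Proof. by move=> a0; rewrite -(powR_mulrn 2 (powR_ge0 a x)) -powRrM. Qed.

Section Sumsets.
Variable R : realType.
Implicit Types (A B : {fset R}) (k : nat) (x y z : R).

Lemma sumsetSP k A z :
  reflect (exists2 x, x \in sumset k A & exists2 a, a \in A & z = x + a)
          (z \in sumset k.+1 A).
Proof.
apply: (iffP idP) => [/imfset2P [x xA [a aA ->]] | [x xA [a aA ->]]].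
  by exists x => //; exists a.
by apply/imfset2P; exists x => //; exists a.
Qed.

Lemma in_sumset0 A z : (z \in sumset 0 A) = (z == 0).
Proof. by rewrite /= inE. Qed.

Lemma sumset1 A : sumset 1 A = A.
Proof.
apply/fsetP => z; apply/sumsetSP/idP => [[x] | zA].
  by rewrite in_sumset0 => /eqP -> [a aA ->]; rewrite add0r.
by exists 0; rewrite ?in_sumset0 //; exists z; rewrite ?add0r.
Qed.

Lemma sumset_ge0 k A : {in A, forall a, 0 < a} -> {in sumset k A, forall x, 0 <= x}.
Proof.
move=> Apos; elim: k => [|k IH] x; first by rewrite in_sumset0 => /eqP ->.
by case/sumsetSP => y /IH y0 [a /Apos a0 ->]; rewrite addr_ge0 // ltW.
Qed.

Lemma sumset_gt0 k A : {in A, forall a, 0 < a} -> {in sumset k.+1 A, forall x, 0 < x}.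
Proof.
move=> Apos x /sumsetSP [y /(sumset_ge0 Apos) y0 [a /Apos a0 ->]].
by rewrite ltr_wpDl.
Qed.

Lemma sumsetS k B A : B `<=` A -> sumset k B `<=` sumset k A.
Proof.
move=> BA; elim: k => [|k /fsubsetP IH] //; apply/fsubsetP => x.
case/sumsetSP => y /IH yA [a aB ->]; apply/sumsetSP; exists y => //.
by exists a => //; apply: (fsubsetP BA).
Qed.

Lemma sumset_scale k B A l : {in B, forall b, l * b \in A} ->
  {in sumset k B, forall x, l * x \in sumset k A}.
Proof.
move=> BA; elim: k => [|k IH] x.
  by rewrite !in_sumset0 => /eqP ->; rewrite mulr0.
case/sumsetSP => y /IH yA [a /BA aB ->]; apply/sumsetSP; exists (l * y) => //.
by exists (l * a) => //; rewrite mulrDr.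
Qed.

Lemma mem_sumsetD k1 k2 A x y : x \in sumset k1 A -> y \in sumset k2 A ->
  x + y \in sumset (k1 + k2) A.
Proof.
move=> xA; elim: k2 y => [|k IH] y.
  by rewrite in_sumset0 => /eqP ->; rewrite addr0 addn0.
case/sumsetSP => z /IH zA [a aA ->]; rewrite addnS; apply/sumsetSP.
by exists (x + z) => //; exists a => //; rewrite addrA.
Qed.

Lemma cardfs_sumset_gt0 k A : (0 < #|` A|)%N -> (0 < #|` sumset k A|)%N.
Proof.
rewrite !cardfs_gt0 => /fset0Pn [a aA].
elim: k => [|k /fset0Pn [x xk]]; apply/fset0Pn.
  by exists 0; rewrite in_sumset0.
by exists (x + a); apply/sumsetSP; exists x => //; exists a.
Qed.

End Sumsets.

Section Prodsets.
Variable R : realType.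
Implicit Types (A B : {fset R}) (z : R).

Lemma prodsetP A z :
  reflect (exists2 a, a \in A & exists2 b, b \in A & z = a * b) (z \in prodset A).
Proof.
apply: (iffP idP) => [/imfset2P [a aA [b bA ->]] | [a aA [b bA ->]]].
  by exists a => //; exists b.
by apply/imfset2P; exists a => //; exists b.
Qed.

Lemma prodsetS B A : B `<=` A -> prodset B `<=` prodset A.
Proof.
move=> /fsubsetP BA; apply/fsubsetP => z /prodsetP [a aB [b bB ->]].
by apply/prodsetP; exists a; [apply: BA | exists b => //; apply: BA].
Qed.

Lemma leq_card_prodset A : {in A, forall a, 0 < a} -> (#|` A| <= #|` prodset A|)%N.
Proof.
move=> Apos; have [->|/fset0Pn [a0 a0A]] := eqVneq A fset0; first by rewrite cardfs0.
have sub : [fset a0 * b | b in A] `<=` prodset A.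
  by apply/fsubsetP => z /imfsetP [b bA ->]; apply/prodsetP; exists a0 => //; exists b.
apply: leq_trans (fsubset_leq_card sub); rewrite card_in_imfset //.
by move=> x y _ _ /= /mulfI; apply; rewrite gt_eqF ?Apos.
Qed.

Lemma doubling_ge1 (M : R) A : {in A, forall a, 0 < a} -> (0 < #|` A|)%N ->
  #|` prodset A|%:R <= M * #|` A|%:R -> 1 <= M.
Proof.
move=> Apos A0 hM; have := leq_card_prodset Apos; rewrite -(ler_nat R) => hA.
by have := le_trans hA hM; rewrite -{1}[X in X <= _]mul1r ler_pM2r ?ltr0n.
Qed.

End Prodsets.

Section LineSums.
Variable R : realType.
Variables (B C : R -> {fset R}).
Hypothesis Bpos : forall x, {in B x, forall b, 0 < b}.
Hypothesis Cpos : forall y, {in C y, forall c, 0 < c}.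

(* The sums of a point (b, x b) on the line of slope x and a point (c, y c)
   on the line of slope y. *)
Definition line_sums (x y : R) : {fset R * R} :=
  [fset (b + c, x * b + y * c) | b in B x, c in C y].

Fixpoint chain_sums (s : seq R) : {fset R * R} :=
  if s is x :: (y :: _) as t then line_sums x y `|` chain_sums t else fset0.

Fixpoint chain_weight (s : seq R) : nat :=
  if s is x :: (y :: _) as t then (#|` B x| * #|` C y| + chain_weight t)%N
  else 0%N.

Lemma line_sums_cone x y p : x < y -> p \in line_sums x y ->
  [/\ 0 < p.1, x * p.1 < p.2 & p.2 < y * p.1].
Proof.
move=> xy /imfset2P [b /Bpos b0 [c /Cpos c0 ->]] /=.
by split; [lra | nra | nra].
Qed.

Lemma card_line_sums x y : x < y -> #|` line_sums x y| = (#|` B x| * #|` C y|)%N.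
Proof.
move=> xy; apply: card_imfset2_inj => b c b' c' _ _ _ _ [e1 e2].
have e : (x - y) * (b - b') =
    (x * b + y * c) - (x * b' + y * c') - y * ((b + c) - (b' + c')) by ring.
move: e; rewrite e1 e2 !subrr mulr0 subr0 => /eqP; rewrite mulf_eq0 subr_eq0.
rewrite lt_eqF //= subr_eq0 => /eqP eb; split => //.
by move: e1; rewrite eb => /addrI.
Qed.

Lemma chain_sums_cone x t : sorted <%R (x :: t) ->
  forall p, p \in chain_sums (x :: t) -> 0 < p.1 /\ x * p.1 < p.2.
Proof.
elim: t x => [|y t IH] x //= /andP [xy yt] p.
rewrite in_fsetU => /orP [/(line_sums_cone xy) [] // | /(IH _ yt) [p1 yp]].
by split => //; apply: lt_trans yp; rewrite ltr_pM2r.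
Qed.

(* Consecutive line sums lie in disjoint open cones, so the union is disjoint. *)
Lemma card_chain_sums s : sorted <%R s -> #|` chain_sums s| = chain_weight s.
Proof.
elim: s => [|x [|y t] IH] //= /andP [xy yt].
have disj : line_sums x y `&` chain_sums (y :: t) = fset0.
  apply/fsetP => p; rewrite in_fsetI in_fset0; apply/negP => /andP [p1 p2].
  have [_ _ py] := line_sums_cone xy p1; have [_ yp] := chain_sums_cone yt p2.
  by move: (lt_trans py yp); rewrite ltxx.
have := cardfsUI (line_sums x y) (chain_sums (y :: t)).
by rewrite disj cardfs0 addn0 => ->; rewrite card_line_sums // IH.
Qed.

Lemma chain_sums_sub (X : {fset R}) s :
  (forall x y b c, x \in s -> y \in s -> b \in B x -> c \in C y ->
     b + c \in X /\ x * b + y * c \in X) -> chain_sums s `<=` X `*` X.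
Proof.
elim: s => [|x [|y t] IH] hX; rewrite /= ?fsub0set //.
rewrite fsubUset; apply/andP; split.
  apply/fsubsetP => p /imfset2P [b bB [c cC ->]]; rewrite in_fsetM /=.
  have yxyt : y \in [:: x, y & t] by rewrite !inE eqxx orbT.
  by have [-> ->] := hX x y b c (mem_head _ _) yxyt bB cC.
by apply: IH => x' y' b c x't y't; apply: hX; rewrite inE ?x't ?y't orbT.
Qed.

Lemma chain_weight_ge (L1 L2 : R) s : 0 <= L1 -> 0 <= L2 ->
  (forall x, x \in s -> L1 <= #|` B x|%:R /\ L2 <= #|` C x|%:R) ->
  (size s).-1%:R * (L1 * L2) <= (chain_weight s)%:R.
Proof.
move=> L10 L20; elim: s => [|x [|y t] IH] hL /=; rewrite ?mul0r //.
have [hx _] := hL x (mem_head _ _).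
have [_ hy] := hL y (mem_behead (s := [:: x, y & t]) (mem_head _ _)).
have IH' := IH (fun z zt => hL z (mem_behead (s := [:: x, y & t]) zt)).
by rewrite natrD natrM -addn1 natrD mulrDl mul1r addrC lerD // ler_pM.
Qed.

End LineSums.

Section Ratios.
Variable R : realType.
Implicit Types (A : {fset R}) (q t : R).

Definition ratioset A : {fset R} := [fset b / a | a in A, b in A].

(* The elements a of A with (a, q a) in A x A, i.e. A x A on the line of slope q. *)
Definition ratio_fiber A q : {fset R} := [fset a in A | q * a \in A].

Definition rich_ratios A t : {fset R} :=
  [fset q in ratioset A | t <= #|` ratio_fiber A q|%:R].

Lemma ratiosetP A q :
  reflect (exists2 a, a \in A & exists2 b, b \in A & q = b / a) (q \in ratioset A).
Proof.
apply: (iffP idP) => [/imfset2P [a aA [b bA ->]] | [a aA [b bA ->]]].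
  by exists a => //; exists b.
by apply/imfset2P; exists a => //; exists b.
Qed.

Lemma ratio_fiber_sub A q : ratio_fiber A q `<=` A.
Proof. exact: fset_sub. Qed.

Lemma ratio_fiber_gt0 A q :
  {in A, forall a, 0 < a} -> {in ratio_fiber A q, forall a, 0 < a}.
Proof. by move=> Apos a /(fsubsetP (ratio_fiber_sub A q)); apply: Apos. Qed.

Lemma mem_ratio_fiber A q a : a \in ratio_fiber A q -> q * a \in A.
Proof. by rewrite !inE => /andP []. Qed.

(* Writing each ratio as q = b_q / a_q, the map (q, c) |-> (a_q c, b_q c)
   injects (A/A) x A into AA x AA. *)
Lemma ruzsa_ratioset A : {in A, forall a, 0 < a} ->
  (#|` ratioset A| * #|` A| <= #|` prodset A| ^ 2)%N.
Proof.
move=> Apos.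
have [rep repP] : {rep : R -> R * R & forall q, q \in ratioset A ->
    [/\ (rep q).1 \in A, (rep q).2 \in A & q = (rep q).2 / (rep q).1]}.
  apply: (choice (P := fun q (p : R * R) => q \in ratioset A ->
    [/\ p.1 \in A, p.2 \in A & q = p.2 / p.1])) => q.
  case: (boolP (q \in ratioset A)) => [/ratiosetP [a aA [b bA ->]]|_].
    by exists (a, b).
  by exists (0, 0).
pose I := [fset ((rep q).1 * c, (rep q).2 * c) | q in ratioset A, c in A].
have -> : (#|` ratioset A| * #|` A| = #|` I|)%N.
  symmetry; apply: card_imfset2_inj => q c q' c' qQ cA q'Q c'A [e1 e2].
  have [a1 _ qe] := repP q qQ; have [a1' _ qe'] := repP q' q'Q.
  have c0 := Apos _ cA; have c0' := Apos _ c'A.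
  have qq' : q = q'.
    have scale (x y z : R) : z != 0 -> y / x = (y * z) / (x * z).
      by move=> z0; rewrite invfM mulrACA divff // mulr1.
    by rewrite qe qe' (scale _ _ c) ?gt_eqF // (scale _ (rep q').2 c') ?gt_eqF // e1 e2.
  by split => //; move: e1; rewrite -qq' => /mulfI; apply; rewrite gt_eqF ?Apos.
have sub : I `<=` prodset A `*` prodset A.
  apply/fsubsetP => p /imfset2P [q qQ [c cA ->]]; rewrite in_fsetM /=.
  have [a1 b1 _] := repP q qQ.
  by apply/andP; split; apply/prodsetP;
    [exists (rep q).1 | exists (rep q).2] => //; exists c.
by rewrite (leq_trans (fsubset_leq_card sub)) // (leq_trans (card_fsetM_le _ _)).
Qed.

Lemma card_ratioset_le A (M : R) : {in A, forall a, 0 < a} -> 0 <= M ->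
  #|` prodset A|%:R <= M * #|` A|%:R -> (0 < #|` A|)%N ->
  #|` ratioset A|%:R <= M ^+ 2 * #|` A|%:R.
Proof.
move=> Apos M0 hM A0; have n0 : 0 < #|` A|%:R :> R by rewrite ltr0n.
have := ruzsa_ratioset Apos; rewrite -(ler_nat R) natrM natrX => hQ.
have hP : #|` prodset A|%:R ^+ 2 <= (M * #|` A|%:R) ^+ 2.
  by rewrite ler_sqr ?nnegrE ?ler0n // mulr_ge0 ?ler0n.
by have := le_trans hQ hP; rewrite exprMn expr2 mulrA ler_pM2r.
Qed.

(* Double counting the pairs (a, b) in A x A according to their ratio b / a. *)
Lemma sum_card_ratio_fiber A : {in A, forall a, 0 < a} ->
  (#|` A| ^ 2 <= \sum_(q <- ratioset A) #|` ratio_fiber A q|)%N.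
Proof.
move=> Apos; under eq_bigr do rewrite card_fset_sep.
rewrite exchange_big /= expnS expn1 card_fset_sum1 big_distrl /=.
rewrite big_seq_cond [X in (_ <= X)%N]big_seq_cond; apply: leq_sum => a /andP [aA _].
rewrite mul1n -card_fset_sep -card_fset_sum1.
have sub : [fset b / a | b in A] `<=` [fset q in ratioset A | q * a \in A].
  apply/fsubsetP => q /imfsetP [b bA ->]; rewrite !inE /=; apply/andP; split.
    by apply/ratiosetP; exists a => //; exists b.
  by rewrite mulfVK ?gt_eqF ?Apos.
apply: leq_trans (fsubset_leq_card sub); rewrite card_in_imfset //=.
by move=> x y _ _ /= /mulIf; apply; rewrite invr_eq0 gt_eqF ?Apos.
Qed.

(* At most |A/A| t <= |A|^2 / 2 of the |A|^2 pairs lie on non-rich lines, and each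
   rich line carries at most |A| of them. *)
Lemma card_rich_ratios A (M : R) : {in A, forall a, 0 < a} -> 0 < M ->
  #|` prodset A|%:R <= M * #|` A|%:R -> (0 < #|` A|)%N ->
  #|` A|%:R / 2 <= #|` rich_ratios A (#|` A|%:R / (2 * M ^+ 2))|%:R :> R.
Proof.
move=> Apos M0 hM A0; set n := #|` A|%:R; set t := n / (2 * M ^+ 2).
have n0 : 0 < n by rewrite ltr0n.
have t0 : 0 < t by rewrite divr_gt0 // mulr_gt0 // exprn_gt0.
have hQ := card_ratioset_le Apos (ltW M0) hM A0; rewrite -/n in hQ.
have hsum := sum_card_ratio_fiber Apos.
rewrite -(ler_nat R) natrX natr_sum -/n in hsum.
have split_rich : \sum_(q <- ratioset A) #|` ratio_fiber A q|%:R <=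
    \sum_(q <- ratioset A) ((nat_of_bool (t <= #|` ratio_fiber A q|%:R))%:R * n + t).
  rewrite big_seq_cond [X in _ <= X]big_seq_cond; apply: ler_sum => q _.
  have fn : #|` ratio_fiber A q|%:R <= n.
    by rewrite ler_nat; apply/fsubset_leq_card/ratio_fiber_sub.
  case: (lerP t #|` ratio_fiber A q|%:R) => h /=.
    by rewrite mulr1n mul1r; lra.
  by rewrite mulr0n mul0r add0r ltW.
have sum_t : \sum_(q <- ratioset A) t = #|` ratioset A|%:R * t.
  by rewrite card_fset_sum1 natr_sum mulr_suml; apply: eq_bigr => q _; rewrite mul1r.
have card_rich :
    \sum_(q <- ratioset A) ((nat_of_bool (t <= #|` ratio_fiber A q|%:R))%:R : R)
    = #|` rich_ratios A t|%:R by rewrite card_fset_sep natr_sum.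
rewrite big_split /= -mulr_suml card_rich sum_t in split_rich.
have : #|` ratioset A|%:R * t <= n ^+ 2 / 2.
  apply: le_trans (ler_wpM2r (ltW t0) hQ) _.
  by rewrite /t le_eqVlt; apply/orP; left; apply/eqP; field; rewrite gt_eqF ?exprn_gt0.
have := le_trans hsum split_rich; set r := #|` rich_ratios A t|%:R => h1 h2.
have : n ^+ 2 / 2 <= r * n by lra.
by rewrite expr2 mulrAC ler_pM2r.
Qed.

End Ratios.

Section SumsetBounds.
Variable R : realType.
Implicit Types (A : {fset R}) (k : nat).

Definition sumset_bound k (p C D : R) : Prop :=
  forall (M : R) (A : {fset R}), 0 < M -> (forall a, a \in A -> 0 < a) ->
    (#|` prodset A|%:R <= M * #|` A|%:R) ->
    C / M `^ D * #|` A|%:R `^ p <= #|` sumset k A|%:R.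

(* What [sumset_bound k p C D] yields on a fiber with at least n / (2 M^2)
   elements of a set of size n and doubling M. *)
Definition rich_fiber_bound (M n p C D : R) : R :=
  C / (2 * M ^+ 3) `^ D * (n / (2 * M ^+ 2)) `^ p.

Lemma rich_fiber_bound_mulE (M n p1 p2 C1 C2 D1 D2 : R) :
  0 < M -> 0 < n -> 0 < C1 -> 0 < C2 ->
  n / 4 * (rich_fiber_bound M n p1 C1 D1 * rich_fiber_bound M n p2 C2 D2) =
  C1 * C2 / (4 * 2 `^ (p1 + p2) * 2 `^ (D1 + D2))
    / M `^ (2 * (p1 + p2) + 3 * (D1 + D2)) * n `^ (1 + p1 + p2).
Proof.
move=> M0 n0 C10 C20; rewrite /rich_fiber_bound.
have -> : (4 : R) = 2 * 2 by lra.
apply: ln_inj; rewrite ?posrE.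
all: rewrite ?(mulr_gt0, invr_gt0, divr_gt0, powR_gt0, exprn_gt0) //.
do 3 (rewrite !lnM ?lnV ?ln_powR ?lnXn; try by
  rewrite ?posrE ?(mulr_gt0, invr_gt0, divr_gt0, powR_gt0, exprn_gt0)).
ring.
Qed.

Lemma doubling_rich_fiber A (M q : R) : 0 < M ->
  #|` prodset A|%:R <= M * #|` A|%:R ->
  #|` A|%:R / (2 * M ^+ 2) <= #|` ratio_fiber A q|%:R ->
  #|` prodset (ratio_fiber A q)|%:R <= 2 * M ^+ 3 * #|` ratio_fiber A q|%:R.
Proof.
move=> M0 hM rich; apply: le_trans (le_trans _ hM) _.
  by rewrite ler_nat; apply/fsubset_leq_card/prodsetS/ratio_fiber_sub.
rewrite ler_pdivrMr ?mulr_gt0 ?exprn_gt0 // in rich.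
apply: le_trans (ler_wpM2l (ltW M0) rich) _.
by rewrite le_eqVlt exprSr; apply/orP; left; apply/eqP; ring.
Qed.

Lemma sumset_rich_fiber_ge k A (M q p C D : R) : 0 < M -> 0 <= p -> 0 < C ->
  sumset_bound k p C D -> {in A, forall a, 0 < a} ->
  #|` prodset A|%:R <= M * #|` A|%:R ->
  #|` A|%:R / (2 * M ^+ 2) <= #|` ratio_fiber A q|%:R ->
  rich_fiber_bound M #|` A|%:R p C D <= #|` sumset k (ratio_fiber A q)|%:R.
Proof.
move=> M0 p0 C0 hk Apos hM rich.
have Fpos := ratio_fiber_gt0 (q := q) Apos.
apply: le_trans (hk _ _ _ Fpos (doubling_rich_fiber M0 hM rich)); last first.
  by rewrite mulr_gt0 ?exprn_gt0.
rewrite ler_wpM2l ?divr_ge0 ?powR_ge0 ?(ltW C0) // ge0_ler_powR ?nnegrE //.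
by rewrite divr_ge0 ?ler0n // mulr_ge0 ?exprn_ge0 // ltW.
Qed.

(* The points (b + c, q b + q' c), with b in k1 F_q and c in k2 F_q', have both
   coordinates in (k1 + k2) A because q F_q is contained in A. *)
Lemma chain_weight_fibers_le k1 k2 A s : (0 < k1)%N -> (0 < k2)%N ->
  {in A, forall a, 0 < a} -> sorted <%R s ->
  (chain_weight (fun q => sumset k1 (ratio_fiber A q))
                (fun q => sumset k2 (ratio_fiber A q)) s
    <= #|` sumset (k1 + k2) A| ^ 2)%N.
Proof.
move=> k1_gt0 k2_gt0 Apos s_sorted.
have Spos k q : (0 < k)%N -> {in sumset k (ratio_fiber A q), forall b, 0 < b}.
  by case: k => // k _; apply/sumset_gt0/ratio_fiber_gt0.
set X := sumset (k1 + k2) A.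
have sub : chain_sums (fun q => sumset k1 (ratio_fiber A q))
                      (fun q => sumset k2 (ratio_fiber A q)) s `<=` X `*` X.
  apply: chain_sums_sub => x y b c _ _ bB cC; split; apply: mem_sumsetD.
  - exact: (fsubsetP (sumsetS _ (ratio_fiber_sub A x))).
  - exact: (fsubsetP (sumsetS _ (ratio_fiber_sub A y))).
  - exact: (sumset_scale (mem_ratio_fiber (q := x))).
  - exact: (sumset_scale (mem_ratio_fiber (q := y))).
rewrite -(card_chain_sums (fun q => Spos k1 q k1_gt0) (fun q => Spos k2 q k2_gt0)) //.
by rewrite expnS expn1 (leq_trans (fsubset_leq_card sub)) ?card_fsetM_le.
Qed.

Lemma sumset_sqr_ge k1 k2 A (M p1 p2 C1 C2 D1 D2 : R) :
  (0 < k1)%N -> (0 < k2)%N -> 0 <= p1 -> 0 <= p2 -> 0 < C1 -> 0 < C2 ->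
  sumset_bound k1 p1 C1 D1 -> sumset_bound k2 p2 C2 D2 ->
  0 < M -> {in A, forall a, 0 < a} -> #|` prodset A|%:R <= M * #|` A|%:R ->
  4 <= #|` A|%:R :> R ->
  #|` A|%:R / 4 * (rich_fiber_bound M #|` A|%:R p1 C1 D1 *
                   rich_fiber_bound M #|` A|%:R p2 C2 D2)
    <= #|` sumset (k1 + k2) A|%:R ^+ 2.
Proof.
move=> k1_gt0 k2_gt0 p1_ge0 p2_ge0 C1_gt0 C2_gt0 hk1 hk2 M0 Apos hM n4.
set n := #|` A|%:R.
set L1 := rich_fiber_bound _ _ _ _ _; set L2 := rich_fiber_bound _ _ _ _ _.
have L_ge0 p C D : 0 < C -> 0 <= rich_fiber_bound M n p C D.
  move=> C0; rewrite mulr_ge0 ?powR_ge0 // divr_ge0 ?powR_ge0 //; exact: ltW.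
set s := sort <=%R (rich_ratios A (n / (2 * M ^+ 2))).
have s_sorted : sorted <%R s.
  by rewrite lt_sorted_uniq_le sort_uniq fset_uniq sort_sorted //; apply: le_total.
have size_s : n / 4 <= (size s).-1%:R.
  have A_gt0 : (0 < #|` A|)%N by rewrite -(ltr0n R) (lt_le_trans _ n4).
  have := card_rich_ratios Apos M0 hM A_gt0; rewrite -/n size_sort.
  case: #|` _| => [|m]; first by rewrite mulr0n; lra.
  by rewrite succnK -(natr1 m); lra.
have fibers_ge q : q \in s -> L1 <= #|` sumset k1 (ratio_fiber A q)|%:R /\
                              L2 <= #|` sumset k2 (ratio_fiber A q)|%:R.
  rewrite mem_sort !inE => /andP [_ rich].
  by split; apply: sumset_rich_fiber_ge.
have L1_ge0 := L_ge0 p1 C1 D1 C1_gt0; have L2_ge0 := L_ge0 p2 C2 D2 C2_gt0.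
apply: le_trans (ler_wpM2r (mulr_ge0 L1_ge0 L2_ge0) size_s) _.
apply: le_trans (chain_weight_ge L1_ge0 L2_ge0 fibers_ge) _.
by rewrite -natrX ler_nat chain_weight_fibers_le.
Qed.
End SumsetBounds.



Lemma sumset_bound_add (R : realType) k1 k2 (p1 p2 C1 C2 D1 D2 : R) :
  (0 < k1)%N -> (0 < k2)%N -> 0 <= p1 -> 0 <= p2 -> 0 < C1 -> 0 < C2 ->
  0 < D1 -> 0 < D2 -> sumset_bound k1 p1 C1 D1 -> sumset_bound k2 p2 C2 D2 ->
  exists C D, [/\ 0 < C, 0 < D & sumset_bound (k1 + k2) ((1 + p1 + p2) / 2) C D].
Proof.
move=> k1_gt0 k2_gt0 p1_ge0 p2_ge0 C1_gt0 C2_gt0 D1_gt0 D2_gt0 hk1 hk2.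
set P := (1 + p1 + p2) / 2; set E := 2 * (p1 + p2) + 3 * (D1 + D2).
set c := C1 * C2 / (4 * 2 `^ (p1 + p2) * 2 `^ (D1 + D2)).
have c_gt0 : 0 < c by rewrite divr_gt0 ?mulr_gt0 ?powR_gt0 //; lra.
have P_gt0 : 0 < P by rewrite /P; lra.
have E_gt0 : 0 < E by rewrite /E; lra.
(* The factor (4 ^ P)^-1 covers |A| < 4, where there may be a single rich ratio. *)
set C := Num.min (Num.sqrt c) (4 `^ P)^-1.
have C_gt0 : 0 < C by rewrite lt_min sqrtr_gt0 c_gt0 invr_gt0 powR_gt0.
exists C, (E / 2); split; rewrite ?divr_gt0 // => M A M0 Apos hM.
set n := #|` A|%:R.
have [A0|A_gt0] := posnP #|` A|.
  by rewrite /n A0 powR0 ?gt_eqF // mulr0.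
have M1 := doubling_ge1 Apos A_gt0 hM.
have M_E_ge1 : 1 <= M `^ (E / 2).
  by rewrite -[X in X <= _](powRr0 M) ler_powR // divr_ge0 ?ltW.
have CM_ge0 : 0 <= C / M `^ (E / 2) by rewrite divr_ge0 ?powR_ge0 ?ltW.
have [n_lt4|n_ge4] := ltP n 4.
  have CM_le : C / M `^ (E / 2) <= (4 `^ P)^-1.
    apply: le_trans (_ : C <= _); last by rewrite ge_min lexx orbT.
    by rewrite ler_pdivrMr ?(lt_le_trans ltr01 M_E_ge1) // ler_peMr // ltW.
  have small : C / M `^ (E / 2) * n `^ P <= (4 `^ P)^-1 * 4 `^ P.
    by rewrite ler_pM ?powR_ge0 // ge0_ler_powR ?nnegrE ?ler0n //; lra.
  rewrite mulVf ?gt_eqF ?powR_gt0 // in small.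
  by apply: le_trans small _; rewrite ler1n cardfs_sumset_gt0.
have := sumset_sqr_ge k1_gt0 k2_gt0 p1_ge0 p2_ge0 C1_gt0 C2_gt0 hk1 hk2 M0 Apos hM n_ge4.
rewrite rich_fiber_bound_mulE // ?ltr0n // -/n -/c -/E => hsqr.
rewrite -ler_sqr ?nnegrE ?ler0n ?(mulr_ge0 CM_ge0 (powR_ge0 _ _)) //.
rewrite !exprMn exprVn !sqr_powR ?ler0n ?(ltW M0) //.
have -> : P * 2 = 1 + p1 + p2 by rewrite /P; field.
have -> : E / 2 * 2 = E by field.
apply: le_trans hsqr; rewrite ler_wpM2r ?powR_ge0 // ler_wpM2r ?invr_ge0 ?powR_ge0 //.
rewrite -[c](sqr_sqrtr (ltW c_gt0)) ler_sqr ?nnegrE ?sqrtr_ge0 ?(ltW C_gt0) //.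
by rewrite ge_min lexx.
Qed.

Section AdmissibleExponents.
Variable R : realType.
Variable Psi : nat -> R.
Hypothesis hPsi : admissible_Psi Psi.

Lemma admissible_Psi_ge1 k : (0 < k)%N -> 1 <= Psi k.
Proof.
have [Psi1 PsiS] := hPsi; elim/ltn_ind: k => k IH k_gt0.
have [k_le1|k_gt1] := leqP k 1.
  have -> : k = 1%N by apply/eqP; rewrite eqn_leq k_le1.
  by rewrite Psi1.
have [k1 [k2 [k1_gt0 k2_gt0 k12 ->]]] := PsiS k k_gt1.
have := IH k1 ltac:(lia) k1_gt0; have := IH k2 ltac:(lia) k2_gt0; lra.
Qed.

Lemma sumset_bound1 : sumset_bound 1 1 (1 : R) 1.
Proof.
move=> M A M0 Apos hM; rewrite sumset1 powRr1 ?powRr1 ?(ltW M0) ?ler0n // mul1r.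
have [->|A_gt0] := posnP #|` A|; first by rewrite mulr0.
rewrite ler_pdivrMl // ler_peMl ?ler0n //.
exact: doubling_ge1 Apos A_gt0 hM.
Qed.

Lemma admissible_sumset_bound k : (0 < k)%N ->
  exists C D, [/\ 0 < C, 0 < D & sumset_bound k (Psi k) C D].
Proof.
have [Psi1 PsiS] := hPsi; elim/ltn_ind: k => k IH k_gt0.
have [k_le1|k_gt1] := leqP k 1.
  have -> : k = 1%N by apply/eqP; rewrite eqn_leq k_le1.
  by exists 1, 1; rewrite Psi1; split => //; apply: sumset_bound1.
have [k1 [k2 [k1_gt0 k2_gt0 k12 ->]]] := PsiS k k_gt1.
have [C1 [D1 [C1_gt0 D1_gt0 hk1]]] := IH k1 ltac:(lia) k1_gt0.
have [C2 [D2 [C2_gt0 D2_gt0 hk2]]] := IH k2 ltac:(lia) k2_gt0.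
have Psi_ge0 j : (0 < j)%N -> 0 <= Psi j.
  by move=> j_gt0; apply: le_trans (admissible_Psi_ge1 j_gt0).
rewrite -k12; exact: (sumset_bound_add k1_gt0 k2_gt0 (Psi_ge0 _ k1_gt0)
  (Psi_ge0 _ k2_gt0) C1_gt0 C2_gt0 D1_gt0 D2_gt0 hk1 hk2).
Qed.

End AdmissibleExponents.

Lemma balanced_split_sqr_le a b : (a <= b <= a.+1)%N ->
  ((2 * (a + b) + 2) * (2 * (a + b) + 2) <= 4 * (2 * a + 2) * (2 * b + 2))%N.
Proof.
move=> ab; have [->|->] : b = a \/ b = a.+1 by lia.
all: nia.
Qed.

Section BalancedPsi.
Variable R : realType.

(* Always split k into k %/ 2 and k - k %/ 2; the recursion runs on fuel, and
   fuel k is enough to evaluate the value at k. *)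
Fixpoint balanced_Psi_rec (fuel k : nat) : R :=
  if fuel is fuel'.+1 then
    if (k <= 1)%N then 1
    else (1 + balanced_Psi_rec fuel' (k %/ 2)%N
            + balanced_Psi_rec fuel' (k - k %/ 2)%N) / 2
  else 1.

Definition balanced_Psi (k : nat) : R := balanced_Psi_rec k k.

Lemma balanced_Psi_rec_fuel f g k : (k <= f.+1)%N -> (k <= g.+1)%N ->
  balanced_Psi_rec f k = balanced_Psi_rec g k.
Proof.
elim: f g k => [|f IH] [|g] k /= hf hg //; first by rewrite hf.
  by have -> : (k <= 1)%N by [].
by case: ifP => // k_gt1; rewrite (IH g (k %/ 2)%N) 1?(IH g (k - k %/ 2)%N) //; lia.
Qed.

Lemma balanced_PsiE k : (1 < k)%N ->
  balanced_Psi k = (1 + balanced_Psi (k %/ 2)%N + balanced_Psi (k - k %/ 2)%N) / 2.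
Proof.
case: k => [|k] // k_gt1; rewrite /balanced_Psi /=.
have -> : (k.+1 <= 1)%N = false by lia.
by rewrite (@balanced_Psi_rec_fuel k (k.+1 %/ 2)%N)
  ?(@balanced_Psi_rec_fuel k (k.+1 - k.+1 %/ 2)%N) //; lia.
Qed.

Lemma balanced_Psi_admissible : admissible_Psi balanced_Psi.
Proof.
split=> // k k_gt1; exists (k %/ 2)%N, (k - k %/ 2)%N.
by split; [lia | lia | lia | rewrite balanced_PsiE].
Qed.

(* The shift 2 k + 2 (instead of 2 k) is what lets the induction close. *)
Lemma ln_le_balanced_Psi k : (0 < k)%N ->
  ln (2 * k + 2)%N%:R <= balanced_Psi k * ln (4 : R).
Proof.
elim/ltn_ind: k => k IH k_gt0; have [k_le1|k_gt1] := leqP k 1.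
  have k1 : k = 1%N by apply/eqP; rewrite eqn_leq k_le1.
  by rewrite k1 [balanced_Psi 1]/= mul1r.
set a := (k %/ 2)%N; set b := (k - k %/ 2)%N.
have := IH a ltac:(lia) ltac:(lia); have := IH b ltac:(lia) ltac:(lia).
have split_sq : ((2 * k + 2) * (2 * k + 2) <= 4 * (2 * a + 2) * (2 * b + 2))%N.
  by rewrite (_ : k = a + b)%N ?balanced_split_sqr_le //; lia.
have pos (m : nat) : 0 < (2 * m + 2)%N%:R :> R by rewrite ltr0n; lia.
have : ln ((2 * k + 2) * (2 * k + 2))%N%:R
         <= ln (4 * (2 * a + 2) * (2 * b + 2))%N%:R :> R.
  by rewrite ler_ln ?posrE ?ltr0n ?ler_nat //; lia.
rewrite !natrM !lnM ?posrE ?mulr_gt0 // (balanced_PsiE k_gt1).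
lra.
Qed.

Lemma log4_le_balanced_Psi k : (0 < k)%N ->
  ln (2 * k%:R) / ln 4 <= balanced_Psi k.
Proof.
move=> k_gt0; rewrite ler_pdivrMr ?ln_gt0 //; last by lra.
apply: le_trans (ln_le_balanced_Psi k_gt0).
have k_ge1 : 1 <= k%:R :> R by rewrite ler1n.
by rewrite ler_ln ?posrE ?natrD ?natrM; lra.
Qed.

End BalancedPsi.

Lemma sumset_bound_exponentW (R : realType) k (p q C D : R) :
  0 < p -> p <= q -> 0 <= C -> sumset_bound k q C D -> sumset_bound k p C D.
Proof.
move=> p_gt0 pq C_ge0 hq M A M0 Apos hM; apply: le_trans (hq M A M0 Apos hM).
rewrite ler_wpM2l ?divr_ge0 ?powR_ge0 //.
have [->|A_gt0] := posnP #|` A|; first by rewrite powR0 ?powR_ge0 ?gt_eqF.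
by rewrite ler_powR // ler1n.
Qed.

Unset Implicit Arguments.

Theorem theorem1p2 (R : realType) (Psi : nat -> R) (hPsi : admissible_Psi Psi) :
  (forall k : nat, (2 <= k)%N ->
    exists C D : R, [/\ 0 < C, 0 < D &
      forall (M : R) (A : {fset R}), 0 < M -> (forall a, a \in A -> 0 < a) ->
        (#|` prodset A|%:R <= M * #|` A|%:R) ->
        C / M `^ D * #|` A|%:R `^ Psi k <= #|` sumset k A|%:R])
  /\
  (forall k : nat, (2 <= k)%N ->
    exists C D : R, [/\ 0 < C, 0 < D &
      forall (M : R) (A : {fset R}), 0 < M -> (forall a, a \in A -> 0 < a) ->
        (#|` prodset A|%:R <= M * #|` A|%:R) ->
        C / M `^ D * #|` A|%:R `^ (ln (2 * k%:R) / ln 4) <= #|` sumset k A|%:R]).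
Proof.
split=> k k_ge2; first exact: admissible_sumset_bound (ltnW k_ge2).
have [C [D [C_gt0 D_gt0 hk]]] :=
  admissible_sumset_bound (balanced_Psi_admissible R) (ltnW k_ge2).
have k_ge2R : 2 <= k%:R :> R by rewrite ler_nat.
have log_gt0 : 0 < ln (2 * k%:R) / ln 4 :> R by rewrite divr_gt0 ?ln_gt0 //; lra.
exists C, D; split=> //.
have Psi_ge := log4_le_balanced_Psi R (ltnW k_ge2).
exact: sumset_bound_exponentW log_gt0 Psi_ge (ltW C_gt0) hk.
Qed.
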